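(* Let $G$ be a $(d+1)$-colourful graph on $[1..n]$ and let $\mathcal{I}\subseteq[1..d+1]$ with $|\mathcal{I}|=3$ be such that $|X(G_\mathcal{I})|$ is a disjoint union of $2$-spheres. Then there exist distinct $i,j\in\mathcal{I}$ such that $$\kappa_{i,j}-\kappa_\mathcal{I}\leq \frac{n}{6}.$$
   Context: A $(d+1)$-colourful graph of (even) order $n$ is a bipartite $(d+1)$-regular multigraph on $[1..n]$ whose edges are coloured with colours in $[1..d+1]$ so that each vertex is incident to exactly one edge of each colour. For $\mathcal{J}\subseteq[1..d+1]$, $G_\mathcal{J}$ is the graph on $[1..n]$ keeping only the edges with colours in $\mathcal{J}$, and $\kappa_\mathcal{J}$ is its number of connected components; $\kappa_{i,j}=\kappa_{\{i,j\}}$. For $|\mathcal{I}|=3$, $X(G_\mathcal{I})$ is the $2$-dimensional complex obtained by taking a triangle with vertices coloured by the three colours of $\mathcal{I}$ for each vertex of $G$, and for each edge $\{u,v\}$ of $G_\mathcal{I}$ of colour $i$ gluing the sides of the triangles of $u$ and $v$ whose endpoints are coloured $\mathcal{I}\setminus\{i\}$ by the colour-preserving isometry. *)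

From HB Require Import structures.
From mathcomp Require Import all_boot all_order all_algebra.
From mathcomp Require Import all_classical all_reals topology.
Set Implicit Arguments. Unset Strict Implicit. Unset Printing Implicit Defensive.
Import Order.TTheory GRing.Theory Num.Theory numFieldTopology.Exports.
Local Open Scope classical_set_scope.
Local Open Scope ring_scope.

(* Coloured graphs.  Vertices [1..n] are 'I_n, colours [1..d+1] are         *)
(* 'I_(d+1).  Since every vertex is incident to exactly one edge of each    *)
(* colour, the edges of colour c form a perfect matching, encoded by the    *)
(* involution  sigma c : 'I_n -> 'I_n  (sigma c v = other endpoint of the   *)
(* c-coloured edge at v).                                                   *)

Definition colourful (d n : nat) (sigma : 'I_d.+1 -> 'I_n -> 'I_n) : Prop :=
  (forall c : 'I_d.+1, involutive (sigma c)) /\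
  (* bipartite: every edge joins the two sides (so no loops) *)
  exists side : 'I_n -> bool, forall (c : 'I_d.+1) (v : 'I_n),
      side (sigma c v) != side v.

Definition adjJ (d n : nat) (sigma : 'I_d.+1 -> 'I_n -> 'I_n)
  (J : {set 'I_d.+1}) : rel 'I_n :=
  fun u v => [exists c in J, (sigma c u == v) || (sigma c v == u)].

Definition kappa (d n : nat) (sigma : 'I_d.+1 -> 'I_n -> 'I_n)
  (J : {set 'I_d.+1}) : nat :=
  n_comp (adjJ sigma J) [pred v : 'I_n | true].

(* The complex X(G_I).  A point of the triangle with vertices coloured by   *)
(* the colours of I is given by its barycentric coordinates                 *)
(* p : 'rV[R]_(d+1), with p 0 c >= 0, p 0 c = 0 for c \notin I, and the     *)
(* coordinates summing to 1.  The side of the triangle whose endpoints are  *)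
(* coloured I \ {i} is { p | p 0 i = 0 }, and the colour-preserving         *)
(* isometry between two such sides is the identity in barycentric           *)
(* coordinates.                                                             *)

Definition triangle (R : realType) (d : nat) (I : {set 'I_d.+1})
  : set 'rV[R]_d.+1 :=
  [set p | (forall c, 0 <= p ord0 c) /\ (forall c, c \notin I -> p ord0 c = 0)
           /\ \sum_c p ord0 c = 1].

Definition tri_union (R : realType) (d n : nat) (I : {set 'I_d.+1})
  : set (discrete_topology 'I_n * 'rV[R]_d.+1)%type :=
  [set x | @triangle R d I x.2].

Notation trisp R n I := (set_type (@tri_union R _ n I)).

Definition zeroI (R : realType) (d : nat) (I : {set 'I_d.+1})
  (p : 'rV[R]_d.+1) : {set 'I_d.+1} :=
  [set c in I | p ord0 c == 0].

(* The equivalence relation generated by the gluings: (u,p) ~ (v,q) iff   *)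
(* p = q and u, v are joined by a path of G using only colours i in I     *)
(* with p_i = 0 (i.e. edges along whose glued side the point p lies).     *)
Definition glue_rel (R : realType) (d n : nat) (sigma : 'I_d.+1 -> 'I_n -> 'I_n)
  (I : {set 'I_d.+1}) : rel (trisp R n I) :=
  fun x y =>
    ((sval x).2 == (sval y).2) &&
    connect (adjJ sigma (@zeroI R d I (sval x).2))
            ((sval x).1 : 'I_n) ((sval y).1 : 'I_n).

Lemma adjJ_sym d n sigma J : symmetric (@adjJ d n sigma J).
Proof.
move=> u v; apply/existsP/existsP => -[c /andP [cJ h]]; exists c;
  by rewrite cJ /= orbC.
Qed.

Lemma glue_rel_refl R d n sigma I : reflexive (@glue_rel R d n sigma I).
Proof. by move=> x; rewrite /glue_rel eqxx connect0. Qed.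

Lemma glue_rel_sym R d n sigma I : symmetric (@glue_rel R d n sigma I).
Proof.
move=> x y; rewrite /glue_rel eq_sym.
case: eqP => //= ->; by rewrite (sym_connect_sym (@adjJ_sym _ _ sigma _)).
Qed.

Lemma glue_rel_trans R d n sigma I : transitive (@glue_rel R d n sigma I).
Proof.
move=> y x z /andP [/eqP exy cxy] /andP [/eqP eyz cyz].
rewrite exy in cxy; rewrite /glue_rel exy eyz eqxx /=.
by rewrite -eyz; exact: connect_trans cxy cyz.
Qed.

Canonical glue_equiv (R : realType) (d n : nat)
  (sigma : 'I_d.+1 -> 'I_n -> 'I_n) (I : {set 'I_d.+1}) :=
  EquivRel (@glue_rel R d n sigma I) (@glue_rel_refl R d n sigma I)
    (@glue_rel_sym R d n sigma I) (@glue_rel_trans R d n sigma I).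

Local Open Scope quotient_scope.

Definition XG (R : realType) (d n : nat) (sigma : 'I_d.+1 -> 'I_n -> 'I_n)
  (I : {set 'I_d.+1}) : topologicalType :=
  quotient_topology {eq_quot (@glue_rel R d n sigma I)}.

(* Model of a disjoint union of k 2-spheres: k disjoint unit spheres in R^3 *)
Definition spheres (R : realType) (k : nat) : set 'rV[R]_3 :=
  [set x | exists2 j : nat, (j < k)%N &
     (x ord0 0 - 3 * j%:R) ^+ 2 + x ord0 1 ^+ 2 + x ord0 2 ^+ 2 = 1].

Definition homeomorphic (X Y : topologicalType) : Prop :=
  exists (f : X -> Y) (g : Y -> X),
    [/\ continuous f, continuous g, cancel f g & cancel g f].

Definition union_of_2spheres (R : realType) (X : topologicalType) : Prop :=
  exists k : nat, homeomorphic X (set_type (@spheres R k) : topologicalType).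

From HB Require Import structures.
From mathcomp Require Import all_boot all_order all_algebra.
From mathcomp Require Import all_classical all_reals topology.
From mathcomp Require Import fingroup perm zify lra.
Import Order.TTheory GRing.Theory Num.Theory numFieldTopology.Exports.
Set Implicit Arguments. Unset Strict Implicit. Unset Printing Implicit Defensive.

(* For I = {i, j, k}, X(G_I) is a closed surface with n triangles, 3n/2 edges
   and kappa_ij + kappa_jk + kappa_ik vertices, and each of its kappa_I
   components has Euler characteristic at most 2.  Hence
   kappa_ij + kappa_jk + kappa_ik <= n/2 + 2 kappa_I, and the smallest of the
   three exceeds kappa_I by at most n/6.
   Combinatorially, put s = sigma_i sigma_j and t = sigma_j sigma_k, so that
   st = sigma_i sigma_k.  The Euler bound is the genus inequality
   c(s) + c(t) + c(st) <= n + 2 orb<s, t> for cycle counts, proved by peeling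
   transpositions off t.  By bipartiteness every {i, j}-coloured cycle splits
   into two cycles of sigma_i sigma_j, so c(sigma_i sigma_j) = 2 kappa_ij; and
   orb<s, t> <= 2 kappa_I since conjugation by sigma_j exchanges the (at most
   two) orbits inside a component of G_I. *)

Section ImageCounting.
Variable T : finType.

Definition fibre_rep (U : eqType) (f : T -> U) x := odflt x [pick y | f y == f x].

Lemma fibre_repE (U : eqType) (f : T -> U) x : f (fibre_rep f x) = f x.
Proof. by rewrite /fibre_rep; case: pickP => [y /eqP //|/(_ x)]; rewrite eqxx. Qed.

Lemma fibre_rep_eq (U : eqType) (f : T -> U) x y :
  f x = f y -> fibre_rep f x = fibre_rep f y.
Proof. by move=> fxy; rewrite /fibre_rep fxy; case: pickP => // /(_ y); rewrite eqxx. Qed.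

Lemma card_fibre_rep (U : finType) (f : T -> U) : #|fibre_rep f @: T| = #|f @: T|.
Proof.
have -> : f @: T = f @: (fibre_rep f @: T).
  by rewrite -imset_comp; apply: eq_imset => x /=; rewrite fibre_repE.
apply/esym/card_in_imset => _ _ /imsetP[x _ ->] /imsetP[y _ ->].
by rewrite !fibre_repE; apply: fibre_rep_eq.
Qed.

Lemma leq_card_imset_refine (U V : finType) (f : T -> U) (g : T -> V) :
  (forall x y, f x = f y -> g x = g y) -> #|g @: T| <= #|f @: T|.
Proof.
move=> fg; have -> : g @: T = g @: (fibre_rep f @: T).
  by rewrite -imset_comp; apply: eq_imset => x /=; apply: fg; rewrite fibre_repE.
by rewrite -(card_fibre_rep f) leq_imset_card.
Qed.

Lemma card_imset_fibre2_le (U V : finType) (f : T -> U) (g : T -> V) (h : T -> T) :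
  (forall x z, g z = g x -> f z = f x \/ f z = f (h x)) ->
  #|f @: T| <= 2 * #|g @: T|.
Proof.
move=> gf; pose r := fibre_rep g.
have sub : f @: T \subset (f \o r) @: T :|: (f \o h \o r) @: T.
  apply/fintype.subsetP => _ /imsetP[z _ ->]; rewrite inE.
  have [->|->] := gf (r z) z (esym (fibre_repE g z)).
    by rewrite imset_f.
  by rewrite orbC imset_f.
apply: leq_trans (subset_leq_card sub) _; apply: leq_trans (leq_card_setU _ _) _.
rewrite mul2n -addnn -(card_fibre_rep g).
by apply: leq_add; rewrite imset_comp leq_imset_card.
Qed.

Lemma double_card_imset_fibre2_le (U V : finType) (f : T -> U) (g : T -> V)
    (h : T -> T) :
  (forall x y, f x = f y -> g x = g y) ->
  (forall x, g (h x) = g x /\ f (h x) <> f x) ->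
  2 * #|g @: T| <= #|f @: T|.
Proof.
move=> fg gh; pose r := fibre_rep g.
have r_eq x y : g x = g y -> r x = r y by apply: fibre_rep_eq.
set A := (f \o r) @: T; set B := (f \o h \o r) @: T.
have cardA : #|A| = #|g @: T|.
  rewrite /A imset_comp -(card_fibre_rep g); apply: card_in_imset.
  by move=> _ _ /imsetP[x _ ->] /imsetP[y _ ->] /fg; rewrite !fibre_repE => /r_eq.
have cardB : #|B| = #|g @: T|.
  rewrite /B (imset_comp (f \o h) r) -(card_fibre_rep g); apply: card_in_imset.
  move=> _ _ /imsetP[x _ ->] /imsetP[y _ ->] /= /fg.
  by rewrite (proj1 (gh _)) (proj1 (gh (r y))) !fibre_repE => /r_eq.
have disjAB : A :&: B = finset.set0.
  apply/setP => u; rewrite !inE; apply/negP => /andP[/imsetP[x _ ->]].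
  case/imsetP => y _ /= E; have := E => /fg; rewrite (proj1 (gh _)) !fibre_repE.
  by move=> /r_eq rxy; move: E; rewrite rxy => E; case: (gh (r y)) => _ /(_ (esym E)).
have := cardsUI A B; rewrite disjAB cards0 addn0 cardA cardB addnn -mul2n => <-.
apply: subset_leq_card; apply/fintype.subsetP => u; rewrite inE.
by case/orP => /imsetP[x _ ->] /=; rewrite imset_f.
Qed.

Lemma card_imset_merge2_le (U V : finType) (f : T -> U) (g : T -> V) (a b : T) :
  (forall x z, g x = g z -> f x = f z \/ f z \in [set f a; f b]) ->
  #|f @: T| <= #|g @: T| + 1.
Proof.
move=> gf; pose r := fibre_rep g; set A := (f \o r) @: T; set S := [set f a; f b].
have sub : f @: T \subset A :|: S.
  apply/fintype.subsetP => _ /imsetP[z _ ->]; rewrite inE.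
  case: (gf (r z) z (fibre_repE g z)) => [<-|->]; last by rewrite orbT.
  by rewrite imset_f.
have fra : f (r a) \in A :&: S.
  rewrite inE imset_f //=; case: (gf a (r a) (esym (fibre_repE g a))) => // <-.
  by rewrite !inE eqxx.
have cardA : #|A| <= #|g @: T|.
  by rewrite /A imset_comp -(card_fibre_rep g) leq_imset_card.
have cardS : #|S| <= 2 by rewrite cards2; case: (_ != _).
have cardAS : 0 < #|A :&: S| by apply/card_gt0P; exists (f (r a)).
have := cardsUI A S; move: (subset_leq_card sub).
move: #|A :|: S| #|A :&: S| cardA cardS cardAS => u v; lia.
Qed.

End ImageCounting.

Section Components.
Variable T : finType.
Implicit Types e : rel T.

Definition ncomp e := #|fingraph.root e @: T|.

Lemma ncompE e : connect_sym e -> n_comp e [pred x : T | true] = ncomp e.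
Proof.
move=> esym; rewrite /n_comp_mem; apply: eq_card => x; rewrite !inE andbT.
apply/eqP/imsetP => [<-|[y _ ->]]; first by exists x.
exact: fingraph.root_root.
Qed.

Lemma connect_ind e (P : T -> Prop) x y :
  P x -> (forall u v, e u v -> P u -> P v) -> connect e x y -> P y.
Proof.
move=> Px Pe /connectP[p + ->]; elim: p x Px => //= z p IHp x Px.
by case/andP => exz pz; apply: IHp pz; apply: Pe Px.
Qed.

Lemma leq_ncomp_sub e e' : connect_sym e -> connect_sym e' ->
  subrel e' (connect e) -> ncomp e <= ncomp e'.
Proof.
move=> esym e'sym e'e; apply: leq_card_imset_refine => x y /(fingraph.rootP e'sym) cxy.
by apply/(fingraph.rootP esym); apply: connect_sub cxy.
Qed.

Definition add_edge e a b : rel T :=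
  fun x y => [|| e x y, (x == a) && (y == b) | (x == b) && (y == a)].

Lemma add_edge_sym e a b : symmetric e -> symmetric (add_edge e a b).
Proof.
move=> esym x y; rewrite /add_edge esym.
by case: (e y x); case: (x == a); case: (y == b); case: (x == b); case: (y == a).
Qed.

Lemma ncomp_add_edge e a b : symmetric e -> ncomp e <= ncomp (add_edge e a b) + 1.
Proof.
move=> /[dup] /sym_connect_sym esym /(add_edge_sym a b) /sym_connect_sym Ksym.
apply: (card_imset_merge2_le (a := a) (b := b)) => x z /(fingraph.rootP Ksym) cxz.
pose P y := [\/ connect e x y, connect e a y | connect e b y].
have : P z.
  apply: (connect_ind (P := P) _ _ cxz); first exact: Or31.
  move=> u v /or3P[euv|/andP[_ /eqP ->]|/andP[_ /eqP ->]].
  - by case=> h; [apply: Or31 | apply: Or32 | apply: Or33];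
      exact: connect_trans h (connect1 euv).
  - by move=> _; apply: Or33.
  - by move=> _; apply: Or32.
case=> h; [left | right | right]; first exact/(fingraph.rootP esym).
  by rewrite !inE (fingraph.rootP esym h) eqxx.
by rewrite !inE (fingraph.rootP esym h) eqxx orbT.
Qed.

End Components.

Section PermPairs.
Variable T : finType.
Implicit Types s t : {perm T}.

Definition ncycles s := #|porbits s|.

Definition perm2_rel s t : rel T :=
  fun x y => [|| s x == y, t x == y, s y == x | t y == x].

Lemma perm2_rel_sym s t : symmetric (perm2_rel s t).
Proof.
move=> x y; rewrite /perm2_rel.
by case: (s x == y); case: (t x == y); case: (s y == x); case: (t y == x).
Qed.

Lemma connect_perm2_sym s t : connect_sym (perm2_rel s t).
Proof. exact/sym_connect_sym/perm2_rel_sym. Qed.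

Lemma ncycles_le s : ncycles s <= #|T|.
Proof. exact: leq_imset_card. Qed.

Lemma ncycles1 : ncycles 1%g = #|T|.
Proof.
rewrite /ncycles /porbits card_imset // => x y xy.
have : y \in porbit 1%g x by rewrite xy porbit_id.
by case/porbitP => i ->; rewrite expg1n perm1.
Qed.

Lemma ncycles_mul_tperm s x y :
  ncycles (s * tperm x y)%g + (x \notin porbit s y).*2 = ncycles s + (x != y).
Proof.
rewrite /ncycles -porbitsV invMg tpermV.
by have := porbits_mul_tperm s^-1 x y; rewrite porbitsV porbitV.
Qed.

Lemma ncycles_le_ncomp_perm2_1 s : ncycles s <= ncomp (perm2_rel s 1%g).
Proof.
apply: leq_card_imset_refine => x y /(fingraph.rootP (connect_perm2_sym s 1%g)).
apply: (connect_ind (P := fun v => porbit s x = porbit s v)) => // u v.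
have porbit_s w : porbit s (s w) = porbit s w.
  by have := porbit_perm s 1 w; rewrite expg1.
by case/or4P => /eqP <- ->; rewrite ?perm1 ?porbit_s.
Qed.

Lemma connect_perm2_mulX s t x i : connect (perm2_rel s t) x (((s * t) ^+ i)%g x).
Proof.
elim: i => [|i IHi]; first by rewrite expg0 perm1.
rewrite expgSr permM; apply: connect_trans IHi _; rewrite permM.
set y := ((s * t) ^+ i)%g x.
have sy : perm2_rel s t y (s y) by rewrite /perm2_rel eqxx.
have tsy : perm2_rel s t (s y) (t (s y)) by rewrite /perm2_rel eqxx orbT.
exact: connect_trans (connect1 sy) (connect1 tsy).
Qed.

Lemma perm2_rel_mul_tperm s t a b (E : rel T) :
  symmetric E -> subrel (perm2_rel s t) E -> connect E a b ->
  subrel (perm2_rel s (t * tperm a b)%g) (connect E).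
Proof.
move=> Esym tE Eab; have Eba : connect E b a by rewrite sym_connect_sym.
have E_t u : connect E u (t u) by apply/connect1/tE; rewrite /perm2_rel eqxx orbT.
have E_tt u : connect E u ((t * tperm a b)%g u).
  rewrite permM; case: tpermP => [tua|tub|_ _]; last exact: E_t.
  - by apply: connect_trans Eab; rewrite -tua.
  - by apply: connect_trans Eba; rewrite -tub.
move=> x y; case/or4P => /eqP <-.
- by apply/connect1/tE; rewrite /perm2_rel eqxx.
- exact: E_tt.
- by rewrite sym_connect_sym //; apply/connect1/tE; rewrite /perm2_rel eqxx.
- by rewrite sym_connect_sym.
Qed.

Lemma ncomp_perm2_mul_tperm s t a b :
  ncomp (perm2_rel s t) <=
  ncomp (perm2_rel s (t * tperm a b)%g) + ~~ connect (perm2_rel s t) a b.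
Proof.
have [ab|_] /= := boolP (connect (perm2_rel s t) a b); rewrite ?addn0.
  apply: leq_ncomp_sub (connect_perm2_sym _ _) (connect_perm2_sym _ _) _.
  exact: perm2_rel_mul_tperm (@perm2_rel_sym s t) (fun _ _ => id) ab.
apply: leq_trans (ncomp_add_edge a b (@perm2_rel_sym s t)) _; rewrite leq_add2r.
have Ksym := add_edge_sym a b (@perm2_rel_sym s t).
apply: leq_ncomp_sub (sym_connect_sym Ksym) (connect_perm2_sym _ _) _.
apply: perm2_rel_mul_tperm => //; first by move=> x y txy; rewrite /add_edge txy.
by apply: connect1; rewrite /add_edge !eqxx orbT.
Qed.

(* For the hypermap (s, t), the left-hand side is #|T| + 2 (orb<s, t> - genus). *)
Lemma ncycles_genus s t :
  ncycles s + ncycles t + ncycles (s * t)%g <= #|T| + 2 * ncomp (perm2_rel s t).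
Proof.
have [k] := ubnP (#|T| - ncycles t); elim: k t => // k IHk t ltk.
have [a ta | t1] := pickP (fun x => t x != x); last first.
  have -> : t = 1%g by apply/permP => x; rewrite perm1; apply/eqP/negbFE/t1.
  by rewrite mulg1 ncycles1; have := ncycles_le_ncomp_perm2_1 s; lia.
(* With b = t a, the cycle of t through a splits in t' = t (a b); and
   st = r (a b) for r = s t' loses a cycle of r only when a and b lie in one
   cycle of r, hence in one orbit of <s, t'>. *)
set b := t a; set t' := (t * tperm a b)%g; set r := (s * t')%g.
have ab : a != b by rewrite eq_sym.
have t't : (t' * tperm a b)%g = t by rewrite -mulgA tperm2 mulg1.
have st : (s * t)%g = (r * tperm a b)%g by rewrite -mulgA t't.
have a_tb : a \in porbit t b by rewrite porbit_sym (mem_porbit t 1 a).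
have cyc_t' := ncycles_mul_tperm t a b; rewrite a_tb ab /= addn0 in cyc_t'.
have cyc_st := ncycles_mul_tperm r a b; rewrite ab -st -mul2n in cyc_st.
have comp_t := ncomp_perm2_mul_tperm s t' a b; rewrite t't in comp_t.
have a_rb : ~~ connect (perm2_rel s t') a b <= (a \notin porbit r b).
  have [/porbitP[i ->]|_] := boolP (a \in porbit r b); last exact: leq_b1.
  by rewrite connect_perm2_sym connect_perm2_mulX.
have := IHk t'; rewrite -/r; have := ncycles_le t'; rewrite -/t' in cyc_t'.
move: a_rb comp_t cyc_st ltk cyc_t'; case: (a \in porbit r b) => /=;
move: (nat_of_bool _) (ncycles s) (ncycles t) (ncycles t') (ncycles r)
  (ncycles (s * t)%g) (ncomp (perm2_rel s t)) (ncomp (perm2_rel s t')) #|T|;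
lia.
Qed.

End PermPairs.

Lemma card3_set3 (T : finType) (A : {set T}) :
  #|A| = 3 -> exists i j k, [/\ i != j, j != k, i != k & A = [set i; j; k]].
Proof.
move=> A3; have /card_gt2P[i [j [k [[iA jA kA] [ij jk ki]]]]] : 2 < #|A| by rewrite A3.
exists i, j, k; rewrite eq_sym in ki; split => //.
apply/esym/eqP; rewrite eqEcard A3; apply/andP; split.
  by apply/fintype.subsetP => c; rewrite !inE -orbA => /or3P[] /eqP ->.
by rewrite finset.setUC cardsU1 !inE negb_or cards2 ij ![k == _]eq_sym ki jk.
Qed.

Section ColourfulGraph.
Variables (d n : nat) (sigma : 'I_d.+1 -> 'I_n -> 'I_n).
Hypothesis sigmaK : forall c, involutive (sigma c).
Variable side : 'I_n -> bool.
Hypothesis side_sigma : forall c v, side (sigma c v) != side v.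
Implicit Types (J : {set 'I_d.+1}) (c i j k : 'I_d.+1) (u v : 'I_n).

Definition sigma_perm c : {perm 'I_n} := perm (inv_inj (sigmaK c)).

Definition sigma2 i j : {perm 'I_n} := (sigma_perm i * sigma_perm j)%g.

Lemma sigma2E i j v : sigma2 i j v = sigma j (sigma i v).
Proof. by rewrite permM !permE. Qed.

Lemma sigma2_mul i j k : (sigma2 i j * sigma2 j k)%g = sigma2 i k.
Proof. by apply/permP => v; rewrite permM !sigma2E sigmaK. Qed.

Lemma side_sigmaE c v : side (sigma c v) = ~~ side v.
Proof. by move: (side_sigma c v); case: (side (sigma c v)); case: (side v). Qed.

Lemma connect_adjJ_sym J : connect_sym (adjJ sigma J).
Proof. exact/sym_connect_sym/adjJ_sym. Qed.

Lemma adjJ_sigma J c v : c \in J -> adjJ sigma J v (sigma c v).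
Proof. by move=> cJ; apply/existsP; exists c; rewrite cJ eqxx. Qed.

Lemma adjJ_colour J u v : adjJ sigma J u v -> exists2 c, c \in J & v = sigma c u.
Proof.
by case/existsP => c /andP[cJ /orP[] /eqP <-]; exists c; rewrite ?sigmaK.
Qed.

Lemma kappaE J : kappa sigma J = ncomp (adjJ sigma J).
Proof. exact/ncompE/connect_adjJ_sym. Qed.

Lemma double_kappa2_le_ncycles i j : 2 * kappa sigma [set i; j] <= ncycles (sigma2 i j).
Proof.
set J := [set i; j]; set s := sigma2 i j.
have iJ : i \in J by rewrite !inE eqxx.
have jJ : j \in J by rewrite !inE eqxx orbT.
have connect_sX v m : connect (adjJ sigma J) v ((s ^+ m)%g v).
  elim: m => [|m IHm]; first by rewrite expg0 perm1.
  rewrite expgSr permM sigma2E; apply: connect_trans IHm _.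
  exact: connect_trans (connect1 (adjJ_sigma _ iJ)) (connect1 (adjJ_sigma _ jJ)).
have side_sX v m : side ((s ^+ m)%g v) = side v.
  elim: m => [|m IHm]; first by rewrite expg0 perm1.
  by rewrite expgSr permM sigma2E !side_sigmaE negbK.
rewrite kappaE; apply: (double_card_imset_fibre2_le (h := sigma i)).
  move=> u v suv; apply/(fingraph.rootP (connect_adjJ_sym J)).
  have : v \in porbit s u by rewrite suv porbit_id.
  by case/porbitP => m ->.
move=> v; split.
  by apply/esym/(fingraph.rootP (connect_adjJ_sym J))/connect1/adjJ_sigma.
move=> s_iv; have : sigma i v \in porbit s v by rewrite -s_iv porbit_id.
by case/porbitP => m /(congr1 side); rewrite side_sX side_sigmaE; case: (side v).
Qed.

Local Notation perm3_rel i j k := (perm2_rel (sigma2 i j) (sigma2 j k)).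

Lemma perm3_rel_ij i j k v : perm3_rel i j k (sigma i v) (sigma j v).
Proof. by rewrite /perm2_rel sigma2E sigmaK eqxx. Qed.

Lemma perm3_rel_jk i j k v : perm3_rel i j k (sigma j v) (sigma k v).
Proof. by rewrite /perm2_rel [sigma2 j k _]sigma2E sigmaK eqxx orbT. Qed.

Lemma connect_perm3_sigma i j k u v :
  connect (perm3_rel i j k) u v ->
  connect (perm3_rel i j k) (sigma j u) (sigma j v).
Proof.
set R := perm3_rel i j k; have Rsym : connect_sym R := connect_perm2_sym _ _.
have forward w : connect R (sigma j w) (sigma j (sigma2 i j w)) /\
                 connect R (sigma j w) (sigma j (sigma2 j k w)).
  rewrite !sigma2E sigmaK; split; rewrite Rsym; apply: connect1.
    exact: perm3_rel_ij.
  by have := perm3_rel_jk i j k (sigma k (sigma j w)); rewrite sigmaK.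
have step x y : R x y -> connect R (sigma j x) (sigma j y).
  case/or4P => /eqP <-; [exact: (forward x).1 | exact: (forward x).2 | |];
    rewrite Rsym; [exact: (forward y).1 | exact: (forward y).2].
move=> uv; apply: (connect_ind (P := fun w => connect R (sigma j u) (sigma j w)) _ _ uv).
  exact: connect0.
by move=> x y /step xy ux; apply: connect_trans ux xy.
Qed.

Lemma connect_adjJ_perm3 i j k u v :
  connect (adjJ sigma [set i; j; k]) u v ->
  connect (perm3_rel i j k) u v \/ connect (perm3_rel i j k) u (sigma j v).
Proof.
set R := perm3_rel i j k; have Rsym : connect_sym R := connect_perm2_sym _ _.
pose P w := connect R u w \/ connect R u (sigma j w).
move=> uv; apply: (connect_ind (P := P) _ _ uv); first by left.
move=> x y /adjJ_colour[c]; rewrite !inE -orbA => /or3P[] /eqP -> -> [ux|ux].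
- right; apply: connect_trans ux (connect1 _).
  by have := perm3_rel_ij i j k (sigma i x); rewrite sigmaK.
- by left; apply: connect_trans ux _; rewrite Rsym; apply/connect1/perm3_rel_ij.
- by right; rewrite sigmaK.
- by left.
- right; apply: connect_trans ux _; rewrite Rsym; apply: connect1.
  by have := perm3_rel_jk i j k (sigma k x); rewrite sigmaK.
- by left; apply: connect_trans ux (connect1 (perm3_rel_jk _ _ _ _)).
Qed.

Lemma ncomp_perm3_le_double_kappa i j k :
  ncomp (perm3_rel i j k) <= 2 * kappa sigma [set i; j; k].
Proof.
have Rsym : connect_sym (perm3_rel i j k) := connect_perm2_sym _ _.
rewrite kappaE; apply: (card_imset_fibre2_le (h := sigma j)) => x z.
move=> /esym /(fingraph.rootP (connect_adjJ_sym _)) /connect_adjJ_perm3[xz|xjz].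
  by left; apply/esym/(fingraph.rootP Rsym).
right; apply/esym/(fingraph.rootP Rsym).
by have := connect_perm3_sigma xjz; rewrite sigmaK Rsym.
Qed.

Lemma kappa_pairs_le i j k :
  2 * (kappa sigma [set i; j] + kappa sigma [set j; k] + kappa sigma [set i; k])
  <= n + 4 * kappa sigma [set i; j; k].
Proof.
have := ncycles_genus (sigma2 i j) (sigma2 j k); rewrite sigma2_mul card_ord.
have := double_kappa2_le_ncycles i j; have := double_kappa2_le_ncycles j k.
have := double_kappa2_le_ncycles i k; have := ncomp_perm3_le_double_kappa i j k.
lia.
Qed.

End ColourfulGraph.

Lemma min3_le_of_sum_le (a b c K n : nat) :
  2 * (a + b + c) <= n + 4 * K ->
  [\/ 6 * a <= n + 6 * K, 6 * b <= n + 6 * K | 6 * c <= n + 6 * K].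
Proof.
move=> sum_le; have [a_le|a_gt] := leqP (6 * a) (n + 6 * K); first exact: Or31.
have [b_le|b_gt] := leqP (6 * b) (n + 6 * K); first exact: Or32.
by apply: Or33; lia.
Qed.

Local Open Scope ring_scope.

Lemma natrB_le_div6 (F : realFieldType) (u K n : nat) :
  (6 * u <= n + 6 * K)%N -> u%:R - K%:R <= n%:R / 6 :> F.
Proof. by rewrite -(ler_nat F) natrD !natrM; lra. Qed.

Theorem lemma1 (R : realType) (d n : nat) (sigma : 'I_d.+1 -> 'I_n -> 'I_n)
  (I : {set 'I_d.+1}) :
  colourful sigma -> #|I| = 3%N ->
  union_of_2spheres R (XG R sigma I) ->
  exists i j : 'I_d.+1, [/\ i \in I, j \in I, i != j &
    (kappa sigma [set i; j])%:R - (kappa sigma I)%:R <= (n%:R / 6 : rat)].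
Proof.
move=> [sigmaK [side side_sigma]] /card3_set3[i [j [k [ij jk ik ->]]]] _.
have iI : i \in [set i; j; k] by rewrite !inE eqxx.
have jI : j \in [set i; j; k] by rewrite !inE eqxx orbT.
have kI : k \in [set i; j; k] by rewrite !inE eqxx orbT.
have [||] := min3_le_of_sum_le (kappa_pairs_le sigmaK side_sigma i j k);
  move=> /(@natrB_le_div6 rat) excess.
- by exists i, j.
- by exists j, k.
- by exists i, k.
Qed.
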